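(* Let $a\in(0,1)$, $p\in(0,1)$, and let $X=(X_t)_{t=0,\dots,n}$ be a stationary Markov chain generated by the copula $C(u,v)=a\min(u,v)+(1-a)\max(u+v-1,0)$ and Bernoulli($p$) marginal distribution, and let $\bar p=\frac{1}{n+1}\sum_{t=0}^nX_t$. Then as $n\to\infty$, $$(n+1)\operatorname{Var}(\bar p)\to \frac{p(1-p)(a+1-2p)}{1-a}\ \text{ if } p<1/2,\qquad (n+1)\operatorname{Var}(\bar p)\to \frac{p(1-p)(2p-1+a)}{1-a}\ \text{ if } p\ge1/2;$$ in particular, for $p\neq1/2$ the asymptotic variance of $\bar p$ equals the asymptotic variance of the maximum likelihood estimator $\hat p$ of $p$, namely the $(p,p)$ entry of the asymptotic covariance matrix of $\sqrt{n+1}((\hat a,\hat p)-(a,p))$.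
   Context: A stationary Markov chain $(X_t)$ is generated by a copula $C$ and a marginal cdf $F$ if each $X_t$ has cdf $F$ and $P(X_t\le x,X_{t+1}\le y)=C(F(x),F(y))$ for all $x,y$; Bernoulli($p$) means $P(X_t=1)=p$. For $p\neq1/2$ the maximum likelihood estimator $(\hat a,\hat p)$ of $(a,p)$ (a consistent root of the likelihood equations based on the transition probabilities of the chain) satisfies $\sqrt{n+1}((\hat a,\hat p)-(a,p))\to N_2(0,\Sigma^{-1})$, where the $(p,p)$ entry of $\Sigma^{-1}$ is $\frac{p(1-p)(a+1-2p)}{1-a}$ for $p<1/2$ and $\frac{p(1-p)(2p-1+a)}{1-a}$ for $p>1/2$. *)

From HB Require Import structures.
From mathcomp Require Import all_boot all_order all_algebra.
From mathcomp Require Import all_classical all_reals topology normedtype sequences.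
Set Implicit Arguments. Unset Strict Implicit. Unset Printing Implicit Defensive.
Import Order.TTheory GRing.Theory Num.Theory.
Local Open Scope ring_scope.

Section Defs.
Variable R : realType.

Definition copulaC (a u v : R) : R :=
  a * Num.min u v + (1 - a) * Num.max (u + v - 1) 0.

Definition bernoulli_cdf (p x : R) : R :=
  if x < 0 then 0 else if x < 1 then 1 - p else 1.

Definition Omega (n : nat) := {ffun 'I_n.+1 -> bool}.

Definition Xv (n : nat) (t : 'I_n.+1) (w : Omega n) : R :=
  (nat_of_bool (w t))%:R.

Definition prob (n : nat) (mu : Omega n -> R) (A : pred (Omega n)) : R :=
  \sum_(w | A w) mu w.

Definition is_pmf (n : nat) (mu : Omega n -> R) : Prop :=
  (forall w, 0 <= mu w) /\ \sum_w mu w = 1.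

Definition is_markov (n : nat) (mu : Omega n -> R) : Prop :=
  forall (t : 'I_n) (x : Omega n),
    let t0 : 'I_n.+1 := inord t in
    let t1 : 'I_n.+1 := inord t.+1 in
    prob mu [pred w : Omega n | [forall s : 'I_n.+1, (s <= t.+1)%N ==> (w s == x s)]]
      * prob mu [pred w : Omega n | w t0 == x t0]
    = prob mu [pred w : Omega n | [forall s : 'I_n.+1, (s <= t)%N ==> (w s == x s)]]
      * prob mu [pred w : Omega n | (w t0 == x t0) && (w t1 == x t1)].

Definition copula_markov_chain (n : nat) (mu : Omega n -> R)
    (C : R -> R -> R) (F : R -> R) : Prop :=
  [/\ is_pmf mu, is_markov mu,
      (forall (t : 'I_n.+1) (x : R), prob mu [pred w : Omega n | Xv t w <= x] = F x) &
      (forall (t : 'I_n) (x y : R),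
         prob mu [pred w : Omega n | (Xv (inord t) w <= x) && (Xv (inord t.+1) w <= y)]
         = C (F x) (F y))].

Definition pbar (n : nat) (w : Omega n) : R :=
  (n.+1%:R)^-1 * \sum_(t < n.+1) Xv t w.

Definition expect (n : nat) (mu : Omega n -> R) (f : Omega n -> R) : R :=
  \sum_w mu w * f w.

Definition var_pbar (n : nat) (mu : Omega n -> R) : R :=
  expect mu (fun w => (pbar w - expect mu (@pbar n)) ^+ 2).

End Defs.

From HB Require Import structures.
From mathcomp Require Import all_boot all_order all_algebra.
From mathcomp Require Import all_classical all_reals topology normedtype sequences.
From mathcomp Require Import ring lra.
Set Implicit Arguments. Unset Strict Implicit. Unset Printing Implicit Defensive.
Import Order.TTheory GRing.Theory Num.Theory numFieldNormedType.Exports.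
Local Open Scope classical_set_scope.
Local Open Scope ring_scope.

(* The chain is a stationary two-state Markov chain, so its covariances decay
   geometrically: the Markov property gives Cov(X_s, X_(t+1)) = rho Cov(X_s, X_t)
   for s <= t, where rho is the lag-one correlation, hence
   Cov(X_s, X_t) = p (1 - p) rho^|s - t|.  Summing this geometric double sum,
   (n + 1) Var(pbar) = p (1 - p) (1 + rho) / (1 - rho) + O(1 / n).  For the copula
   C, inclusion-exclusion gives P(X_t = X_(t+1) = 1) = 2p - 1 + C(1 - p, 1 - p),
   so rho = (a - p) / (1 - p) if p < 1/2 and rho = (a + p - 1) / p otherwise. *)

Section Expectation.
Variables (R : realType) (n : nat) (mu : Omega n -> R).
Local Notation E := (expect mu).

Lemma eq_expect (f g : Omega n -> R) : f =1 g -> E f = E g.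
Proof. by move=> fg; apply: eq_bigr => w _; rewrite fg. Qed.

Lemma expectD (f g : Omega n -> R) : E (fun w => f w + g w) = E f + E g.
Proof. by rewrite /expect -big_split; apply: eq_bigr => w _; rewrite mulrDr. Qed.

Lemma expectZ c (f : Omega n -> R) : E (fun w => c * f w) = c * E f.
Proof. by rewrite /expect mulr_sumr; apply: eq_bigr => w _; rewrite mulrCA. Qed.

Lemma expectB (f g : Omega n -> R) : E (fun w => f w - g w) = E f - E g.
Proof.
rewrite expectD -mulN1r -expectZ.
by apply: congr1; apply: eq_expect => w; rewrite mulN1r.
Qed.

Lemma expect_sum (I : finType) (f : I -> Omega n -> R) :
  E (fun w => \sum_i f i w) = \sum_i E (f i).
Proof.
rewrite /expect; under eq_bigr => w _ do rewrite mulr_sumr.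
exact: exchange_big.
Qed.

Lemma prob_expect (A : pred (Omega n)) : prob mu A = E (fun w => (A w)%:R).
Proof.
rewrite /prob /expect big_mkcond; apply: eq_bigr => w _.
by case: (A w); rewrite ?mulr1 ?mulr0.
Qed.

Lemma eq_prob (A B : pred (Omega n)) : A =1 B -> prob mu A = prob mu B.
Proof. exact: eq_bigl. Qed.

Lemma expect_cst c : \sum_w mu w = 1 -> E (fun=> c) = c.
Proof. by move=> mu1; rewrite /expect -big_distrl /= mu1 mul1r. Qed.

End Expectation.

Arguments eq_expect {R n mu f} g.

Section Markov.
Variables (R : realType) (n : nat) (mu : Omega n -> R).
Local Notation E := (expect mu).

Definition prefix_event (t : nat) (x : Omega n) : pred (Omega n) :=
  [pred w : Omega n | [forall s : 'I_n.+1, (s <= t)%N ==> (w s == x s)]].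

Definition truncate (t : nat) (w : Omega n) : Omega n :=
  [ffun s : 'I_n.+1 => (s <= t)%N && w s].

Definition prefix_measurable (t : nat) (h : Omega n -> R) :=
  forall w w' : Omega n, (forall s : 'I_n.+1, (s <= t)%N -> w s = w' s) -> h w = h w'.

Lemma prefix_eventP t (x w : Omega n) :
  reflect (forall s : 'I_n.+1, (s <= t)%N -> w s = x s) (prefix_event t x w).
Proof.
apply: (iffP forallP) => [h s st | h s]; last by apply/implyP => /h ->.
by apply/eqP; move/implyP: (h s); apply.
Qed.

Lemma truncate_id t (w : Omega n) : truncate t (truncate t w) = truncate t w.
Proof. by apply/ffunP => s; rewrite !ffunE andbA andbb. Qed.

Lemma prefix_event_truncate t (x w : Omega n) :
  truncate t x = x -> prefix_event t x w = (truncate t w == x).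
Proof.
move=> tx; apply/prefix_eventP/eqP => [h | <- s st]; last by rewrite ffunE st.
rewrite -tx; apply/ffunP => s; rewrite !ffunE.
by case: (boolP (s <= t)%N) => // /h ->.
Qed.

Lemma expect_by_prefix t (F : Omega n -> R) :
  E F = \sum_(x | truncate t x == x) \sum_(w in prefix_event t x) mu w * F w.
Proof.
rewrite /expect (partition_big (truncate t) (fun x => truncate t x == x)) => [|w _];
  last by rewrite truncate_id.
apply: eq_bigr => x /eqP tx; apply: eq_bigl => w.
by symmetry; apply: prefix_event_truncate.
Qed.

Lemma sum_prefix_measurableM t (x : Omega n) (h g : Omega n -> R) :
  prefix_measurable t h ->
  \sum_(w in prefix_event t x) mu w * (h w * g w)
  = h x * \sum_(w in prefix_event t x) mu w * g w.
Proof.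
move=> hh; rewrite mulr_sumr; apply: eq_bigr => w /prefix_eventP wx.
by rewrite (hh w x wx) mulrCA.
Qed.

Hypothesis markov : is_markov mu.

Variable t : 'I_n.
Let t0 : 'I_n.+1 := inord t.
Let t1 : 'I_n.+1 := inord t.+1.

Let val_t0 : t0 = t :> nat.
Proof. by rewrite /t0 inordK // ltnS ltnW. Qed.

Let val_t1 : t1 = t.+1 :> nat.
Proof. by rewrite /t1 inordK // ltnS. Qed.

Lemma markov_prefix (x : Omega n) (z : bool) :
  prob mu [pred w : Omega n | prefix_event t x w && (w t1 == z)]
    * prob mu [pred w : Omega n | w t0 == x t0]
  = prob mu (prefix_event t x)
    * prob mu [pred w : Omega n | (w t0 == x t0) && (w t1 == z)].
Proof.
pose x' : Omega n := [ffun s => if s == t1 then z else x s].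
have x't1 : x' t1 = z by rewrite ffunE eqxx.
have x'_le (s : 'I_n.+1) : (s <= t)%N -> x' s = x s.
  by move=> st; rewrite ffunE ifN //; apply: contraTneq st => ->; rewrite val_t1 ltnn.
have prefix_x' : prefix_event t x' =1 prefix_event t x.
  by move=> w; apply/prefix_eventP/prefix_eventP => h s st; rewrite -?x'_le // h // x'_le.
have prefixS_x' :
    prefix_event t.+1 x' =1 [pred w : Omega n | prefix_event t x w && (w t1 == z)].
  move=> w; apply/prefix_eventP/andP => [h | [/prefix_eventP h /eqP wz] s].
    split; last by rewrite -x't1 h // val_t1.
    by apply/prefix_eventP => s st; rewrite -x'_le // h // leqW.
  rewrite leq_eqVlt ltnS => /orP[/eqP st1 | st]; last by rewrite x'_le // h.
  have -> : s = t1 by apply: val_inj; rewrite /= val_t1.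
  by rewrite x't1 wz.
have := markov t x'; rewrite /= -/t0 -/t1 (x'_le t0) ?val_t0 // x't1.
rewrite -/(prefix_event t.+1 x') -/(prefix_event t x').
by rewrite (eq_prob mu prefix_x') (eq_prob mu prefixS_x').
Qed.

(* The Markov property is stated for prefixes of the path; summing it over all
   prefixes of length t + 1 extends it to functions of the first t + 1 states. *)
Lemma markov_expect (h : Omega n -> R) (y z : bool) : prefix_measurable t h ->
  E (fun w => h w * (w t0 == y)%:R * (w t1 == z)%:R)
    * prob mu [pred w : Omega n | w t0 == y]
  = E (fun w => h w * (w t0 == y)%:R)
    * prob mu [pred w : Omega n | (w t0 == y) && (w t1 == z)].
Proof.
move=> hh; pose hy w := h w * (w t0 == y)%:R.
have hyM : prefix_measurable t hy.
  by move=> w w' ww'; rewrite /hy (hh w w' ww') ww' ?val_t0.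
rewrite [E (fun w => h w * _)](eq_expect (fun w => hy w * 1)) => [|w];
  last by rewrite mulr1.
rewrite !(expect_by_prefix t) !big_distrl; apply: eq_bigr => x _ /=.
rewrite !(sum_prefix_measurableM x _ hyM) /hy /=.
case: (eqVneq (x t0) y) => [<- | _]; last by rewrite !mulr0 !mul0r.
rewrite -!mulrA; congr (_ * (_ * _)).
have -> : \sum_(w in prefix_event t x) mu w * 1 = prob mu (prefix_event t x).
  by apply: eq_bigr => w _; rewrite mulr1.
have -> : \sum_(w in prefix_event t x) mu w * (w t1 == z)%:R
          = prob mu [pred w : Omega n | prefix_event t x w && (w t1 == z)].
  rewrite /prob big_mkcondr; apply: eq_bigr => w _.
  by case: (w t1 == z); rewrite ?mulr1 ?mulr0.
exact: markov_prefix.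
Qed.

End Markov.

Definition lag_corr (R : realType) (p q : R) := (q - p ^+ 2) / (p * (1 - p)).

Section Covariance.
Variables (R : realType) (n : nat) (mu : Omega n -> R) (p q : R).
Hypotheses (mu1 : \sum_w mu w = 1) (markov : is_markov mu).
Hypotheses (p_gt0 : 0 < p) (p_lt1 : p < 1).
Hypothesis mean : forall t : 'I_n.+1, expect mu (Xv R t) = p.
Hypothesis joint : forall t : 'I_n,
  expect mu (fun w => Xv R (inord t) w * Xv R (inord t.+1) w) = q.
Local Notation E := (expect mu).
Local Notation X s := (@Xv R n (inord s)).
Local Notation rho := (lag_corr p q).

Lemma prob_eq1 (t : 'I_n.+1) : prob mu [pred w : Omega n | w t == true] = p.
Proof.
by rewrite prob_expect -(mean t); apply: eq_expect => w; rewrite /Xv /=; case: (w t).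
Qed.

Lemma prob_eq0 (t : 'I_n.+1) : prob mu [pred w : Omega n | w t == false] = 1 - p.
Proof.
rewrite prob_expect -(mean t) -[Z in Z - _](expect_cst 1 mu1) -expectB.
by apply: eq_expect => w /=; rewrite /Xv; case: (w t); rewrite ?subrr ?subr0.
Qed.

Lemma prob_step11 (t : 'I_n) :
  prob mu [pred w : Omega n | (w (inord t) == true) && (w (inord t.+1) == true)] = q.
Proof.
rewrite prob_expect -(joint t); apply: eq_expect => w /=; rewrite /Xv.
by case: (w _); case: (w _); rewrite /= ?mulr1 ?mulr0.
Qed.

Lemma prob_step01 (t : 'I_n) :
  prob mu [pred w : Omega n | (w (inord t) == false) && (w (inord t.+1) == true)] = p - q.
Proof.
rewrite prob_expect -(joint t) -(mean (inord t.+1)) -expectB.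
apply: eq_expect => w /=; rewrite /Xv.
by case: (w _); case: (w _); rewrite /= ?mulr1 ?mulr0 ?subrr ?subr0.
Qed.

(* Condition on the value of X_t and apply the Markov property to h = X_s. *)
Lemma moment_step (s : nat) (t : 'I_n) : (s <= t)%N ->
  let u := E (fun w => X s w * X t w) in
  E (fun w => X s w * X t.+1 w) = u * q / p + (p - u) * (p - q) / (1 - p).
Proof.
move=> st u; set t0 : 'I_n.+1 := inord t; set t1 : 'I_n.+1 := inord t.+1.
have XsM : prefix_measurable t (X s).
  by move=> w w' ww'; rewrite /Xv ww' // inordK // ltnS (leq_trans st) // ltnW.
have := markov_expect markov true true XsM; rewrite prob_eq1 prob_step11.
have -> : E (fun w => X s w * (w t0 == true)%:R) = u.
  by apply: eq_expect => w; rewrite /Xv -/t0 /=; case: (w t0); rewrite ?mulr1 ?mulr0.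
have := markov_expect markov false true XsM; rewrite prob_eq0 prob_step01.
have -> : E (fun w => X s w * (w t0 == false)%:R) = p - u.
  rewrite -(mean (inord s)) -expectB; apply: eq_expect => w.
  by rewrite /Xv -/t0 /=; case: (w t0); rewrite /= ?mulr1 ?mulr0 ?subrr ?subr0.
set a0 := E _; set a1 := E _ => M0 M1.
have -> : E (fun w => X s w * X t.+1 w) = a1 + a0.
  rewrite -expectD; apply: eq_expect => w; rewrite /Xv -/t0 -/t1.
  by case: (w t0); case: (w t1); rewrite /= ?mulr1 ?mulr0 ?addr0 ?add0r.
have p_neq0 : p != 0 by rewrite gt_eqF.
have p'_neq0 : 1 - p != 0 by rewrite subr_eq0 eq_sym lt_eqF.
by rewrite -M1 -M0 !mulfK.
Qed.

Lemma cov_step (s : nat) (t : 'I_n) : (s <= t)%N ->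
  E (fun w => X s w * X t.+1 w) - p ^+ 2 = rho * (E (fun w => X s w * X t w) - p ^+ 2).
Proof.
move=> st; rewrite moment_step // /lag_corr.
by field; rewrite !lt0r_neq0 ?subr_gt0.
Qed.

Lemma cov_lag k s : (s + k <= n)%N ->
  E (fun w => X s w * X (s + k) w) = p ^+ 2 + p * (1 - p) * rho ^+ k.
Proof.
elim: k => [|k IHk] skn.
  rewrite addn0 (eq_expect (X s)) => [|w]; first by rewrite mean; ring.
  by rewrite /Xv; case: (w _); rewrite ?mulr1 ?mulr0.
have sk : (s + k < n)%N by rewrite -addnS.
rewrite -(subrK (p ^+ 2) (E _)) addnS.
have /= -> := @cov_step s (Ordinal sk) (leq_addr k s).
by rewrite (IHk (ltnW sk)) [rho ^+ k.+1]exprS; ring.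
Qed.

Lemma cov_distn (s t : 'I_n.+1) :
  E (fun w => Xv R s w * Xv R t w) = p ^+ 2 + p * (1 - p) * rho ^+ `|s - t|.
Proof.
wlog st : s t / (s <= t)%N.
  move=> cov; case: (leqP s t) => [/cov // | /ltnW ts].
  by rewrite distnC -cov //; apply: eq_expect => w; rewrite mulrC.
have tn : (s + (t - s) <= n)%N by rewrite subnKC // -ltnS.
by rewrite distnEr // -(cov_lag tn) subnKC // !inord_val.
Qed.

Lemma expect_pbar : E (@pbar R n) = p.
Proof.
have N0 : n.+1%:R != 0 :> R by rewrite pnatr_eq0.
rewrite /pbar expectZ expect_sum; under eq_bigr do rewrite mean.
by rewrite sumr_const card_ord -[p *+ _]mulr_natl mulKf.
Qed.

Lemma var_pbar_cov : var_pbar mu = n.+1%:R ^- 2 *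
  \sum_(s < n.+1) \sum_(t < n.+1) (E (fun w => Xv R s w * Xv R t w) - p ^+ 2).
Proof.
have N0 : n.+1%:R != 0 :> R by rewrite pnatr_eq0.
have centered w : pbar R w - p = n.+1%:R^-1 * \sum_(t < n.+1) (Xv R t w - p).
  by rewrite /pbar sumrB sumr_const card_ord -[p *+ _]mulr_natl mulrBr mulKf.
rewrite /var_pbar expect_pbar (eq_expect (fun w => n.+1%:R ^- 2 *
    \sum_(s < n.+1) \sum_(t < n.+1) (Xv R s w - p) * (Xv R t w - p))) => [|w]; last first.
  rewrite centered exprMn exprVn; congr (_ * _); rewrite expr2 mulr_suml.
  by apply: eq_bigr => s _; rewrite mulr_sumr.
rewrite expectZ expect_sum; congr (_ * _); apply: eq_bigr => s _.
rewrite expect_sum; apply: eq_bigr => t _.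
rewrite (eq_expect (fun w => Xv R s w * Xv R t w
    + (- p * Xv R t w + (- p * Xv R s w + p ^+ 2)))) => [|w]; last by ring.
by rewrite !expectD !expectZ expect_cst // !mean; ring.
Qed.

Lemma var_pbar_corr : var_pbar mu =
  n.+1%:R ^- 2 * (p * (1 - p)) * \sum_(s < n.+1) \sum_(t < n.+1) rho ^+ `|s - t|.
Proof.
rewrite var_pbar_cov -mulrA; congr (_ * _); rewrite mulr_sumr; apply: eq_bigr => s _.
by rewrite mulr_sumr; apply: eq_bigr => t _; rewrite cov_distn addrAC subrr add0r.
Qed.

End Covariance.

Lemma sum_expr_distnN (R : comPzRingType) (r : R) N :
  (1 - r) * \sum_(s < N) r ^+ `|s - N| = r * (1 - r ^+ N).
Proof.
rewrite (reindex_inj rev_ord_inj) /=.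
under eq_bigr => i _ do rewrite distnEr ?leq_subr // subKn // exprS.
by rewrite -mulr_sumr mulrCA -[1 - r ^+ N]opprB subrX1 -mulNr opprB.
Qed.

Lemma sum_expr_distn (R : comPzRingType) (r : R) N :
  (1 - r) ^+ 2 * \sum_(s < N) \sum_(t < N) r ^+ `|s - t|
  = N%:R * (1 + r) * (1 - r) - 2 * r * (1 - r ^+ N).
Proof.
elim: N => [|N IHN]; first by rewrite big_ord0 expr0; ring.
rewrite big_ord_recr /=; under eq_bigr do rewrite big_ord_recr /=.
rewrite big_ord_recr /= distnn expr0 big_split /=.
under [X in _ * (_ + (X + _)) = _]eq_bigr do rewrite distnC.
set S := \sum_(s < N) _; set G := \sum_(s < N) _.
have -> : (1 - r) ^+ 2 * (S + G + (G + 1))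
    = (1 - r) ^+ 2 * S + 2 * ((1 - r) * G) * (1 - r) + (1 - r) ^+ 2 by ring.
by rewrite IHN sum_expr_distnN -[N.+1%:R]natr1 [r ^+ N.+1]exprS; ring.
Qed.

Lemma cvg_one_subX_divn (R : realType) (r : R) : `|r| < 1 ->
  (fun n : nat => (1 - r ^+ n.+1) / n.+1%:R) @ \oo --> (0 : R^o).
Proof.
move=> r_lt1.
have : ((fun n => 1 - r * r ^+ n) \* @harmonic R) @ \oo --> ((1 - r * 0) * 0 : R^o).
  apply: cvgM; last exact: cvg_harmonic.
  by apply: cvgB; [exact: cvg_cst | apply: cvgM; [exact: cvg_cst | exact: cvg_expr]].
by rewrite mulr0; apply: cvg_trans; apply: near_eq_cvg; near=> k; rewrite /= exprS.
Unshelve. all: end_near.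
Qed.

Definition copula_corr (R : realType) (C : R -> R -> R) (p : R) : R :=
  lag_corr p (2 * p - 1 + C (1 - p) (1 - p)).

Lemma bernoulli_cdf0 (R : realType) (p : R) : bernoulli_cdf p 0 = 1 - p.
Proof. by rewrite /bernoulli_cdf ltxx ltr01. Qed.

Lemma Xv_le0 (R : realType) n (t : 'I_n.+1) (w : Omega n) : (Xv R t w <= 0) = ~~ w t.
Proof. by rewrite /Xv; case: (w t); rewrite /= ?ler10 ?lexx. Qed.

Section CopulaChain.
Variables (R : realType) (n : nat) (mu : Omega n -> R) (C : R -> R -> R) (p : R).
Hypothesis chain : copula_markov_chain mu C (bernoulli_cdf p).
Local Notation E := (expect mu).
Local Notation r := (copula_corr C p).

Lemma copula_chain_prob0 (t : 'I_n.+1) : E (fun w => (~~ w t)%:R) = 1 - p.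
Proof.
case: chain => _ _ marginal _; rewrite -(bernoulli_cdf0 p) -(marginal t 0) prob_expect.
by apply: eq_expect => w /=; rewrite Xv_le0.
Qed.

Lemma copula_chain_mean (t : 'I_n.+1) : E (Xv R t) = p.
Proof.
case: chain => [[_ mu1] _ _ _].
rewrite (eq_expect (fun w => 1 - (~~ w t)%:R)) => [|w]; last first.
  by rewrite /Xv; case: (w t); rewrite ?subr0 ?subrr.
by rewrite expectB expect_cst // copula_chain_prob0; ring.
Qed.

Lemma copula_chain_joint (t : 'I_n) :
  E (fun w => Xv R (inord t) w * Xv R (inord t.+1) w) = 2 * p - 1 + C (1 - p) (1 - p).
Proof.
case: chain => [[_ mu1] _ _ joint].
have zero2 : E (fun w => (~~ w (inord t) && ~~ w (inord t.+1))%:R) = C (1 - p) (1 - p).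
  rewrite -(bernoulli_cdf0 p) -(joint t 0 0) prob_expect.
  by apply: eq_expect => w /=; rewrite !Xv_le0.
rewrite -zero2 (eq_expect (fun w => 1 - (~~ w (inord t))%:R
    - (~~ w (inord t.+1))%:R + (~~ w (inord t) && ~~ w (inord t.+1))%:R)) => [|w].
  by rewrite expectD !expectB expect_cst // !copula_chain_prob0; ring.
by rewrite /Xv; case: (w _); case: (w _); rewrite /= ?mulr1 ?mulr0 ?subr0 ?subrr; ring.
Qed.

Lemma scaled_var_pbar_closed : 0 < p -> p < 1 -> r != 1 ->
  n.+1%:R * var_pbar mu = p * (1 - p) * (1 + r) / (1 - r)
    - 2 * p * (1 - p) * r / (1 - r) ^+ 2 * ((1 - r ^+ n.+1) / n.+1%:R).
Proof.
move=> p_gt0 p_lt1 r_neq1; case: chain => [[_ mu1] markov _ _].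
rewrite (var_pbar_corr mu1 markov p_gt0 p_lt1 copula_chain_mean copula_chain_joint).
have r'_neq0 : 1 - r != 0 by rewrite subr_eq0 eq_sym.
have N_neq0 : n.+1%:R != 0 :> R by rewrite pnatr_eq0.
have -> : \sum_(s < n.+1) \sum_(t < n.+1) r ^+ `|s - t|
    = (n.+1%:R * (1 + r) * (1 - r) - 2 * r * (1 - r ^+ n.+1)) / (1 - r) ^+ 2.
  by rewrite -sum_expr_distn mulrAC divff ?mul1r // expf_neq0.
by field; rewrite r'_neq0 addrC natr1 N_neq0.
Qed.

End CopulaChain.

Lemma cvg_scaled_var_pbar (R : realType) (C : R -> R -> R) (p : R)
    (mu : forall n, Omega n -> R) :
  0 < p -> p < 1 -> (forall n, copula_markov_chain (mu n) C (bernoulli_cdf p)) ->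
  `|copula_corr C p| < 1 ->
  (fun n => n.+1%:R * var_pbar (mu n)) @ \oo -->
    (p * (1 - p) * (1 + copula_corr C p) / (1 - copula_corr C p) : R^o).
Proof.
move=> p_gt0 p_lt1 chain; set r := copula_corr C p => r_lt1.
have r_neq1 : r != 1 by apply: contraTneq r_lt1 => ->; rewrite normr1 ltxx.
rewrite (funext (fun n => scaled_var_pbar_closed (chain n) p_gt0 p_lt1 r_neq1)).
have := cvgB (cvg_cst (p * (1 - p) * (1 + r) / (1 - r) : R^o))
  (cvgM (cvg_cst (2 * p * (1 - p) * r / (1 - r) ^+ 2 : R^o)) (cvg_one_subX_divn r_lt1)).
by rewrite mulr0 subr0; apply.
Qed.

Lemma copulaC_corr_lt_half (R : realType) (a p : R) : 0 < p -> p < 2^-1 ->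
  copula_corr (copulaC a) p = (a - p) / (1 - p).
Proof.
move=> p_gt0 p_half; rewrite /copula_corr /lag_corr /copulaC minxx max_l; last by lra.
by field; rewrite gt_eqF ?subr_gt0 //=; lra.
Qed.

Lemma copulaC_corr_ge_half (R : realType) (a p : R) : 2^-1 <= p -> p < 1 ->
  copula_corr (copulaC a) p = (a + p - 1) / p.
Proof.
move=> p_half p_lt1; rewrite /copula_corr /lag_corr /copulaC minxx max_r; last by lra.
by field; rewrite !gt_eqF ?subr_gt0 //=; lra.
Qed.

Theorem proposition4 (R : realType) (a p : R)
  (ha : 0 < a < 1) (hp : 0 < p < 1)
  (mu : forall n : nat, Omega n -> R)
  (hmu : forall n : nat,
     copula_markov_chain (mu n) (copulaC a) (bernoulli_cdf p)) :
  (p < 2^-1 ->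
     (fun n : nat => n.+1%:R * var_pbar (mu n)) @ \oo -->
       (p * (1 - p) * (a + 1 - 2 * p) / (1 - a) : R^o)) /\
  (2^-1 <= p ->
     (fun n : nat => n.+1%:R * var_pbar (mu n)) @ \oo -->
       (p * (1 - p) * (2 * p - 1 + a) / (1 - a) : R^o)).
Proof.
have [/andP[a_gt0 a_lt1] /andP[p_gt0 p_lt1]] := (ha, hp).
have := cvg_scaled_var_pbar p_gt0 p_lt1 hmu; set r := copula_corr _ _ => cvg_var.
split=> p_half.
  have r_eq : r = (a - p) / (1 - p) by exact: copulaC_corr_lt_half.
  have -> : p * (1 - p) * (a + 1 - 2 * p) / (1 - a) = p * (1 - p) * (1 + r) / (1 - r).
    by rewrite r_eq; field; rewrite !lt0r_neq0 //; lra.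
  apply: cvg_var; rewrite r_eq ltr_norml ltr_pdivlMr ?ltr_pdivrMr ?subr_gt0 //.
  by apply/andP; split; lra.
have r_eq : r = (a + p - 1) / p by exact: copulaC_corr_ge_half.
have -> : p * (1 - p) * (2 * p - 1 + a) / (1 - a) = p * (1 - p) * (1 + r) / (1 - r).
  by rewrite r_eq; field; rewrite !lt0r_neq0 //; lra.
apply: cvg_var; rewrite r_eq ltr_norml ltr_pdivlMr ?ltr_pdivrMr //.
by apply/andP; split; lra.
Qed.
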